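(* Let $\mathbb{P}=(X,E,\mathscr{T})$ be a digraph with topology satisfying condition (TED): for all $x,y\in X$ with $(x,y)\notin E$ there exists $\varphi\in\mathrm{MPM}(\mathbb{P})$ with $\varphi(x)=1$ and $\varphi(y)=0$. Then $\mathbb{P}$ is doubly-disconnected, i.e. for all $x,y\in X$: (a) if $yE\not\subseteq xE$ then there is $\varphi\in\mathrm{MPM}(\mathbb{P})$ with $\varphi(x)=1$ and $\varphi(y)\neq 1$ (i.e. $\varphi(y)=0$ or $y\notin\mathrm{dom}\varphi$); (b) if $Ey\not\subseteq Ex$ then there is $\varphi\in\mathrm{MPM}(\mathbb{P})$ with $\varphi(x)=0$ and $\varphi(y)\ne 0$.
   Context: A digraph with topology is a triple $\mathbb{P}=(X,E,\mathscr{T})$ with $E\subseteq X\times X$ and $\mathscr{T}$ a topology on $X$. For $x\in X$: $xE=\{y: (x,y)\in E\}$, $Ex=\{y:(y,x)\in E\}$. Let $\underset{\sim}{2}_{\mathscr{T}}$ be the set $\{0,1\}$ with relation $\le$ and the discrete topology. A partial morphism $\mathbb{P}\to\underset{\sim}{2}_{\mathscr{T}}$ is a partial map $\varphi:X\to\{0,1\}$ whose domain is $\mathscr{T}$-closed, such that $\varphi(x)\le\varphi(y)$ whenever $x,y\in\mathrm{dom}\varphi$ and $(x,y)\in E$, and whose restriction to $\mathrm{dom}\varphi$ is continuous. A maximal partial morphism (MPM) is a partial morphism with no proper extension that is a partial morphism; $\mathrm{MPM}(\mathbb{P})$ denotes the set of all MPMs from $\mathbb{P}$ to $\underset{\sim}{2}_{\mathscr{T}}$.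 *)

From HB Require Import structures.
From mathcomp Require Import all_boot all_order.
From mathcomp Require Import boolp classical_sets topology.
Set Implicit Arguments. Unset Strict Implicit. Unset Printing Implicit Defensive.
Import Order.TTheory.
Local Open Scope classical_set_scope.

(* A partial map X -> {0,1} is encoded as X -> option bool (None = undefined);
   true = 1, false = 0. *)

Definition pdom (X : Type) (phi : X -> option bool) : set X :=
  [set x | phi x <> None].

(* Continuity of the restriction phi|dom : dom -> {0,1}, dom carrying the
   subspace topology and {0,1} the discrete topology: the preimage of every
   subset S of {0,1} is relatively open in dom. *)
Definition restr_continuous (X : topologicalType) (phi : X -> option bool) :=
  forall S : set bool, exists U : set X,
    open U /\ [set x | exists b, phi x = Some b /\ S b] = U `&` pdom phi.

Definition partial_morphism (X : topologicalType) (E : X -> X -> Prop)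
    (phi : X -> option bool) : Prop :=
  [/\ closed (pdom phi),
      (forall x y bx by_, E x y -> phi x = Some bx -> phi y = Some by_ ->
                          (bx <= by_)%O)
    & restr_continuous phi].

Definition pextends (X : Type) (phi psi : X -> option bool) : Prop :=
  forall x b, phi x = Some b -> psi x = Some b.

Definition MPM (X : topologicalType) (E : X -> X -> Prop)
    (phi : X -> option bool) : Prop :=
  partial_morphism E phi /\
  forall psi, partial_morphism E psi -> pextends phi psi -> psi = phi.

Definition TED (X : topologicalType) (E : X -> X -> Prop) : Prop :=
  forall x y, ~ E x y ->
    exists phi, MPM E phi /\ phi x = Some true /\ phi y = Some false.

Definition doubly_disconnected (X : topologicalType) (E : X -> X -> Prop) :=
  forall x y : X,
    ((~ (forall z, E y z -> E x z)) ->
       exists phi, MPM E phi /\ phi x = Some true /\ phi y <> Some true) /\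
    ((~ (forall z, E z y -> E z x)) ->
       exists phi, MPM E phi /\ phi x = Some false /\ phi y <> Some false).

(* If yE is not contained in xE, pick z with (y,z) in E and (x,z) not in E;
   (TED) gives an MPM phi with phi(x) = 1 and phi(z) = 0, and monotonicity
   along the edge (y,z) forbids phi(y) = 1.  Part (b) is dual. *)
From mathcomp Require Import all_boot all_order.
From mathcomp Require Import boolp classical_sets topology.

Lemma partial_morphism_edge_not_10 (X : topologicalType) (E : X -> X -> Prop)
    (phi : X -> option bool) (u v : X) :
  partial_morphism E phi -> E u v -> phi v = Some false -> phi u <> Some true.
Proof. by case=> _ mono _ Euv pv pu; have := mono u v true false Euv pu pv. Qed.

Lemma TED_out_separation (X : topologicalType) (E : X -> X -> Prop) (x y : X) :
  TED E -> ~ (forall z, E y z -> E x z) ->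
  exists phi, MPM E phi /\ phi x = Some true /\ phi y <> Some true.
Proof.
move=> ted /existsNP [z /not_implyP [Eyz nExz]].
have [phi [mpm [px pz]]] := ted x z nExz.
exists phi; split=> //; split=> //.
exact: partial_morphism_edge_not_10 mpm.1 Eyz pz.
Qed.

Lemma TED_in_separation (X : topologicalType) (E : X -> X -> Prop) (x y : X) :
  TED E -> ~ (forall z, E z y -> E z x) ->
  exists phi, MPM E phi /\ phi x = Some false /\ phi y <> Some false.
Proof.
move=> ted /existsNP [z /not_implyP [Ezy nEzx]].
have [phi [mpm [pz px]]] := ted z x nEzx.
exists phi; split=> //; split=> // py.
exact: partial_morphism_edge_not_10 mpm.1 Ezy py pz.
Qed.

Theorem lemma3p3 (X : topologicalType) (E : X -> X -> Prop) :
  TED E -> doubly_disconnected E.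
Proof.
move=> ted x y; split; [exact: TED_out_separation | exact: TED_in_separation].
Qed.
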